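(* Consider the model described in the context with fixed $N_\text{c}$ and $s$, and let the data rate $r$ vary over $(\lambda L,\infty)$; as $r$ decreases to $\lambda L$ the mean delay $\mathbb{E}\{D\}$ increases to $\infty$. Let $P_\text{o} = N_\text{c} P_\text{Bm} + \Delta_{P_\text{B}} c_0 s^{\beta-1} + P_\text{RF}$ and $P_\text{s} = P_\text{o} - P_\text{sleep} - 2\lambda E_\text{sw}$, and let $\Omega$ denote the principal branch of the Lambert W function. Then: (1) If \[ \lambda < \frac{P_\text{o} - P_\text{sleep}}{2E_\text{sw}} \quad\text{and}\quad L < \frac{W}{\lambda \ln 2}\left[\Omega\!\left(\frac{g\eta P_\text{s} - 1}{\mathrm{e}}\right) + 1\right], \] then there exists a unique rate $r_\text{e}^* \in (\lambda L,\infty)$ minimizing the average power consumption $\mathbb{E}\{P\}$, given by \[ r_\text{e}^* = \frac{W}{\ln 2}\left[\Omega\!\left(\frac{g\eta P_\text{s} - 1}{\mathrm{e}}\right) + 1\right]. \] (2) If this condition is not satisfied, then the average power consumption $\mathbb{E}\{P\}$ is monotonically decreasing in the average delay $\mathbb{E}\{D\}$ (equivalently, increasing in $r$ on $(\lambda L,\infty)$). (3) In both cases, as the average delay tends to infinity (i.e. $r \downarrow \lambda L$), the average power consumption tends to \[ P_\text{o} + \kappa \Delta_{P_\text{B}} s^{\beta-1}\lambda L + \frac{2^{\lambda L/W} - 1}{g\eta}. \]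
   Context: A virtual base station (VBS) is modeled as an M/G/1 processor-sharing queue: flows arrive at rate $\lambda>0$, each with mean size $L>0$, and are served at total rate $r$ (bits/s) whenever the queue is nonempty; $r > \lambda L$, and the load is $\rho = \lambda L / r$. The mean queue length is $\mathbb{E}\{n\} = \lambda L/(r-\lambda L)$ and the mean delay is $\mathbb{E}\{D\} = \mathbb{E}\{n\}/\lambda = L/(r-\lambda L)$. The transmit power $P_\text{out}$ needed for rate $r$ is given by $r = W\log_2(1 + g P_\text{out})$, i.e. $P_\text{out} = (2^{r/W}-1)/g$, where $W>0$ is the bandwidth and $g>0$ the channel gain. When busy the VBS consumes $P_\text{B} + P_\text{R}$ with RRH power $P_\text{R} = P_\text{out}/\eta + P_\text{RF}$ ($\eta\in(0,1]$ the power amplifier efficiency, $P_\text{RF}\ge 0$) and BBU power $P_\text{B} = N_\text{c} P_\text{Bm} + \Delta_{P_\text{B}} c_0 s^{\beta-1} + \Delta_{P_\text{B}}\kappa r s^{\beta-1}$, where $N_\text{c}$ is the number of active CPU cores, $s>0$ the CPU speed, $P_\text{Bm}$ the minimum per-core power, $\Delta_{P_\text{B}} = (P_\text{BM}-P_\text{Bm})/s_0^\beta \ge 0$ with $P_\text{BM}$ the maximum per-core power and $s_0$ a reference speed, and $c_0,\kappa,\beta$ are nonnegative constants. When the queue is empty the VBS sleeps with power $P_\text{sleep}$, and each on/off switch costs energy $E_\text{sw} > 0$. With $\mathbb{E}\{T_\text{c}\} = 1/(\lambda(1-\rho))$ the mean length of a busy-plus-idle cycle, the average power is $\mathbb{E}\{P\}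 = \rho (P_\text{B} + P_\text{R}) + (1-\rho) P_\text{sleep} + 2E_\text{sw}/\mathbb{E}\{T_\text{c}\}$. *)

From Stdlib Require Import Reals ClassicalEpsilon.
From Coquelicot Require Import Coquelicot.
Open Scope R_scope.

(* Principal branch of the Lambert W function: for y >= -1/e it is the
   unique w >= -1 with w * e^w = y (chosen via Hilbert's epsilon; the
   value for y < -1/e is irrelevant and unspecified). *)
Definition LambertW0 (y : R) : R :=
  epsilon (inhabits 0) (fun w => -1 <= w /\ w * exp w = y).

Definition P_out (W g r : R) : R := (Rpower 2 (r / W) - 1) / g.

Definition DeltaPB (PBM PBm s0 beta : R) : R := (PBM - PBm) / Rpower s0 beta.

Definition P_B (Nc : nat) (PBm PBM s0 beta c0 kappa s r : R) : R :=
  INR Nc * PBm + DeltaPB PBM PBm s0 beta * c0 * Rpower s (beta - 1)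
  + DeltaPB PBM PBm s0 beta * kappa * r * Rpower s (beta - 1).

Definition P_R (W g eta PRF r : R) : R := P_out W g r / eta + PRF.

Definition load (lam L r : R) : R := lam * L / r.

Definition mean_delay (lam L r : R) : R := L / (r - lam * L).

Definition mean_cycle (lam L r : R) : R := 1 / (lam * (1 - load lam L r)).

Definition avg_power (lam L W g eta PRF : R) (Nc : nat)
    (PBm PBM s0 beta c0 kappa s Psleep Esw r : R) : R :=
  load lam L r * (P_B Nc PBm PBM s0 beta c0 kappa s r + P_R W g eta PRF r)
  + (1 - load lam L r) * Psleep
  + 2 * Esw / mean_cycle lam L r.

Definition P_o (Nc : nat) (PBm PBM s0 beta c0 s PRF : R) : R :=
  INR Nc * PBm + DeltaPB PBM PBm s0 beta * c0 * Rpower s (beta - 1) + PRF.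

Definition P_s (Nc : nat) (PBm PBM s0 beta c0 s PRF Psleep lam Esw : R) : R :=
  P_o Nc PBm PBM s0 beta c0 s PRF - Psleep - 2 * lam * Esw.

From Stdlib Require Import Reals ClassicalEpsilon Lra.
From Coquelicot Require Import Coquelicot.
Open Scope R_scope.

(* With a = ln 2 / W and c = g eta P_s - 1, the average power on (lambda L, oo)
   is an affine image, with positive slope lambda L / (g eta), of
   phi(r) = (c + e^(a r)) / r.  The sign of phi'(r) is that of
   u(r) = (a r - 1) e^(a r) - c, which increases on [0, oo) and vanishes
   exactly at a r = 1 + W0(c / e).  Hence phi is unimodal with minimum at
   r* = (1 + W0(c / e)) / a when r* > lambda L and c > -1 (the two conditions
   of the theorem), and increasing on (lambda L, oo) otherwise, since then
   u(lambda L) >= 0.  The limit is continuity of the closed form at lambda L. *)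

Lemma lt_of_derive_pos (f f' : R -> R) (x y : R) :
  x < y ->
  (forall z, x <= z <= y -> derivable_pt_lim f z (f' z)) ->
  (forall z, x < z < y -> 0 < f' z) ->
  f x < f y.
Proof.
  intros Hxy Hd Hpos.
  destruct (MVT_cor2 f f' x y Hxy Hd) as [z [Hmvt Hz]].
  assert (0 < f' z * (y - x)) by (apply Rmult_lt_0_compat; [apply Hpos, Hz | lra]).
  lra.
Qed.

Lemma lt_of_derive_neg (f f' : R -> R) (x y : R) :
  x < y ->
  (forall z, x <= z <= y -> derivable_pt_lim f z (f' z)) ->
  (forall z, x < z < y -> f' z < 0) ->
  f y < f x.
Proof.
  intros Hxy Hd Hneg.
  enough ((- f)%F x < (- f)%F y) by (unfold opp_fct in *; lra).
  apply (lt_of_derive_pos _ (fun z => - f' z)); auto.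
  - intros z Hz. apply derivable_pt_lim_opp, Hd, Hz.
  - intros z Hz. specialize (Hneg z Hz). lra.
Qed.

Lemma LambertW0_spec (y : R) :
  - / exp 1 < y -> -1 < LambertW0 y /\ LambertW0 y * exp (LambertW0 y) = y.
Proof.
  intros Hy.
  assert (Hexp1 : -1 * exp (-1) = - / exp 1)
    by (replace (-1) with (- (1)) by ring; rewrite exp_Ropp; ring).
  assert (Hex : exists w, -1 <= w /\ w * exp w = y).
  { set (b := Rabs y + 1).
    assert (Hyb : y < b) by (unfold b; pose proof (Rle_abs y); lra).
    assert (Hb : 1 <= b) by (unfold b; pose proof (Rabs_pos y); lra).
    assert (Heb : 1 <= exp b) by (rewrite <- exp_0; apply Rlt_le, exp_increasing; lra).
    assert (Hcont : continuity (fun w => w * exp w - y)).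
    { intros w. apply continuity_pt_filterlim.
      apply (ex_derive_continuous (fun w => w * exp w - y)). auto_derive; auto. }
    destruct (IVT _ (-1) b Hcont) as [w [Hw Hroot]]; cbv beta; try lra.
    - nra.
    - exists w. split; lra. }
  destruct (epsilon_spec (inhabits 0) _ Hex) as [Hw Hroot].
  fold (LambertW0 y) in Hw, Hroot.
  split; auto.
  destruct Hw as [Hw | Hw]; auto.
  rewrite <- Hw in Hroot. lra.
Qed.

Section ExpRatio.

Variables a c : R.
Hypothesis Ha : 0 < a.

Definition exp_ratio (r : R) : R := (c + exp (a * r)) / r.

Definition exp_ratio_slope (r : R) : R := (a * r - 1) * exp (a * r) - c.

Lemma exp_ratio_derive (r : R) :
  r <> 0 -> derivable_pt_lim exp_ratio r (exp_ratio_slope r / (r * r)).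
Proof.
  intros Hr. apply is_derive_Reals. unfold exp_ratio, exp_ratio_slope.
  auto_derive; auto. field. auto.
Qed.

Lemma exp_ratio_slope_increasing (x y : R) :
  0 <= x -> x < y -> exp_ratio_slope x < exp_ratio_slope y.
Proof.
  intros Hx Hxy.
  apply (lt_of_derive_pos _ (fun z => a * a * z * exp (a * z))); auto.
  - intros z _. apply is_derive_Reals. unfold exp_ratio_slope.
    auto_derive; auto. ring.
  - intros z Hz. pose proof (exp_pos (a * z)).
    repeat apply Rmult_lt_0_compat; lra.
Qed.

Lemma exp_ratio_increasing (x y : R) :
  0 < x -> x < y -> 0 <= exp_ratio_slope x -> exp_ratio x < exp_ratio y.
Proof.
  intros Hx Hxy Hslope.
  apply (lt_of_derive_pos _ (fun z => exp_ratio_slope z / (z * z))); auto.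
  - intros z Hz. apply exp_ratio_derive. lra.
  - intros z Hz. apply Rdiv_lt_0_compat; [|nra].
    pose proof (exp_ratio_slope_increasing x z). lra.
Qed.

Lemma exp_ratio_decreasing (x y : R) :
  0 < x -> x < y -> exp_ratio_slope y <= 0 -> exp_ratio y < exp_ratio x.
Proof.
  intros Hx Hxy Hslope.
  apply (lt_of_derive_neg _ (fun z => exp_ratio_slope z / (z * z))); auto.
  - intros z Hz. apply exp_ratio_derive. lra.
  - intros z Hz. apply Rdiv_neg_pos; [|nra].
    pose proof (exp_ratio_slope_increasing z y). lra.
Qed.

Lemma exp_ratio_argmin (r0 r : R) :
  0 < r0 -> exp_ratio_slope r0 = 0 -> 0 < r -> r <> r0 ->
  exp_ratio r0 < exp_ratio r.
Proof.
  intros Hr0 Hslope Hr Hne.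
  destruct (Rtotal_order r r0) as [Hlt | [Heq | Hgt]]; [| contradiction |].
  - apply exp_ratio_decreasing; lra.
  - apply exp_ratio_increasing; lra.
Qed.

Lemma exp_ratio_slope_LambertW0 :
  -1 < c ->
  0 < (LambertW0 (c / exp 1) + 1) / a /\
  exp_ratio_slope ((LambertW0 (c / exp 1) + 1) / a) = 0.
Proof.
  intros Hc.
  assert (He : 0 < exp 1) by apply exp_pos.
  assert (Hy : - / exp 1 < c / exp 1).
  { replace (- / exp 1) with (-1 / exp 1) by (field; lra).
    apply Rmult_lt_compat_r; [apply Rinv_0_lt_compat |]; lra. }
  destruct (LambertW0_spec _ Hy) as [Hw Hroot].
  set (w := LambertW0 (c / exp 1)) in *.
  split.
  - apply Rdiv_lt_0_compat; lra.
  - unfold exp_ratio_slope.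
    replace (a * ((w + 1) / a)) with (w + 1) by (field; lra).
    replace (w + 1 - 1) with w by ring.
    rewrite exp_plus, <- Rmult_assoc, Hroot. field. lra.
Qed.

Lemma exp_ratio_slope_nonneg (x : R) :
  0 < x -> ~ (-1 < c /\ x < (LambertW0 (c / exp 1) + 1) / a) ->
  0 <= exp_ratio_slope x.
Proof.
  intros Hx Hnot.
  destruct (Rle_or_lt c (-1)) as [Hc | Hc].
  - assert (exp_ratio_slope 0 < exp_ratio_slope x)
      by (apply exp_ratio_slope_increasing; lra).
    assert (exp_ratio_slope 0 = -1 - c)
      by (unfold exp_ratio_slope; rewrite Rmult_0_r, exp_0; ring).
    lra.
  - destruct (exp_ratio_slope_LambertW0 Hc) as [Hpos Hroot].
    set (r0 := (LambertW0 (c / exp 1) + 1) / a) in *.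
    destruct (Rlt_or_le x r0) as [Hlt | [Hlt | Heq]].
    + exfalso. auto.
    + rewrite <- Hroot. left. apply exp_ratio_slope_increasing; lra.
    + rewrite <- Heq, Hroot. lra.
Qed.

End ExpRatio.

Lemma filterlim_at_right_eq_continuous (f h : R -> R) (x : R) :
  (forall r, x < r -> f r = h r) -> continuous h x ->
  filterlim f (at_right x) (locally (h x)).
Proof.
  intros Heq Hcont.
  apply (filterlim_ext_loc h).
  { exists (mkposreal 1 Rlt_0_1). intros r _ Hr. symmetry. apply Heq, Hr. }
  apply (filterlim_filter_le_1 (F := locally x)); auto.
  intros P HP. unfold at_right, within. apply (filter_imp P); auto.
Qed.

Lemma Rpower2_exp (W r : R) : Rpower 2 (r / W) = exp (ln 2 / W * r).
Proof. unfold Rpower, Rdiv. f_equal. ring. Qed.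

Lemma avg_power_exp_ratio
  (lam L W g eta PRF : R) (Nc : nat) (PBm PBM s0 beta c0 kappa s Psleep Esw r : R) :
  0 < lam -> 0 < L -> g <> 0 -> eta <> 0 -> lam * L < r ->
  avg_power lam L W g eta PRF Nc PBm PBM s0 beta c0 kappa s Psleep Esw r =
  lam * L * kappa * DeltaPB PBM PBm s0 beta * Rpower s (beta - 1)
  + Psleep + 2 * lam * Esw
  + lam * L / (g * eta) *
    exp_ratio (ln 2 / W)
      (g * eta * P_s Nc PBm PBM s0 beta c0 s PRF Psleep lam Esw - 1) r.
Proof.
  intros Hlam HL Hg Heta Hr.
  assert (Hr0 : 0 < r) by nra.
  assert (Hload : 1 - lam * L / r <> 0).
  { enough (lam * L / r < 1) by lra.
    apply (Rmult_lt_reg_r r); [lra |].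
    unfold Rdiv. rewrite Rmult_assoc, Rinv_l; lra. }
  unfold avg_power, P_B, P_R, P_out, mean_cycle, load, exp_ratio, P_s, P_o.
  rewrite Rpower2_exp.
  field. repeat split; lra.
Qed.

Theorem proposition1
  (lam L W g eta PRF : R) (Nc : nat) (PBm PBM s0 beta c0 kappa s Psleep Esw : R)
  (Hlam : 0 < lam) (HL : 0 < L) (HW : 0 < W) (Hg : 0 < g)
  (Heta0 : 0 < eta) (Heta1 : eta <= 1) (HPRF : 0 <= PRF)
  (Hs : 0 < s) (Hs0 : 0 < s0) (HPB : PBm <= PBM)
  (Hc0 : 0 <= c0) (Hkappa : 0 <= kappa) (Hbeta : 0 <= beta) (HEsw : 0 < Esw) :
  let EP := avg_power lam L W g eta PRF Nc PBm PBM s0 beta c0 kappa s Psleep Esw in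
  let Po := P_o Nc PBm PBM s0 beta c0 s PRF in
  let Ps := P_s Nc PBm PBM s0 beta c0 s PRF Psleep lam Esw in
  let rstar := W / ln 2 * (LambertW0 ((g * eta * Ps - 1) / exp 1) + 1) in
  let cond := lam < (Po - Psleep) / (2 * Esw) /\
              L < W / (lam * ln 2) * (LambertW0 ((g * eta * Ps - 1) / exp 1) + 1) in
  (* (1) unique minimizer of E{P} over (lambda L, oo), equal to rstar *)
  (cond ->
     lam * L < rstar /\
     (forall r, lam * L < r -> r <> rstar -> EP rstar < EP r)) /\
  (* (2) otherwise E{P} is increasing in r, i.e. decreasing in E{D} *)
  (~ cond ->
     forall r1 r2, lam * L < r1 -> r1 < r2 -> EP r1 < EP r2) /\
  (* (3) limit as E{D} -> oo, i.e. r -> lambda L from the right *)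
  filterlim EP (at_right (lam * L))
    (locally (Po + kappa * DeltaPB PBM PBm s0 beta * Rpower s (beta - 1) * lam * L
              + (Rpower 2 (lam * L / W) - 1) / (g * eta))).
Proof.
  intros EP Po Ps rstar cond.
  pose proof ln_lt_2 as Hln2.
  set (a := ln 2 / W). set (c := g * eta * Ps - 1).
  set (G := fun r => lam * L * kappa * DeltaPB PBM PBm s0 beta * Rpower s (beta - 1)
                     + Psleep + 2 * lam * Esw + lam * L / (g * eta) * exp_ratio a c r).
  assert (Ha : 0 < a) by (apply Rdiv_lt_0_compat; lra).
  assert (Hk : 0 < g * eta) by nra.
  assert (HlL : 0 < lam * L) by nra.
  assert (HEP : forall r, lam * L < r -> EP r = G r)
    by (intros; apply avg_power_exp_ratio; lra).
  assert (HEP_lt : forall x y, lam * L < x -> lam * L < y ->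
                     exp_ratio a c x < exp_ratio a c y -> EP x < EP y).
  { intros x y Hx Hy Hxy. rewrite (HEP x Hx), (HEP y Hy). unfold G.
    assert (0 < lam * L / (g * eta)) by (apply Rdiv_lt_0_compat; lra). nra. }
  set (w := LambertW0 (c / exp 1)).
  assert (Hrstar : rstar = (w + 1) / a) by (unfold rstar, a; fold c w; field; lra).
  assert (Hcond : cond <-> -1 < c /\ lam * L < rstar).
  { unfold cond. fold c w.
    replace (W / (lam * ln 2) * (w + 1)) with (rstar / lam) by (rewrite Hrstar; unfold a; field; lra).
    rewrite <- !Rlt_div_r by lra.
    unfold c, Ps, P_s. fold Po. split; intros [H1 H2]; split; nra. }
  split; [| split].
  - intros Hc. apply Hcond in Hc as [Hc Hlt].
    destruct (exp_ratio_slope_LambertW0 a c Ha Hc) as [_ Hroot].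
    fold w in Hroot. rewrite <- Hrstar in Hroot.
    split; auto.
    intros r Hr Hne. apply HEP_lt; auto.
    apply exp_ratio_argmin; auto; lra.
  - intros Hnc r1 r2 Hr1 Hr12.
    apply HEP_lt; try lra.
    apply exp_ratio_increasing, exp_ratio_slope_nonneg; try lra.
    fold w. rewrite <- Hrstar. intros [Hc Hlt]. apply Hnc, Hcond. split; lra.
  - replace (Po + kappa * DeltaPB PBM PBm s0 beta * Rpower s (beta - 1) * lam * L
             + (Rpower 2 (lam * L / W) - 1) / (g * eta)) with (G (lam * L)).
    2: { unfold G, exp_ratio, c, a, Ps, P_s, Po. rewrite Rpower2_exp. field. repeat split; lra. }
    apply filterlim_at_right_eq_continuous; auto.
    apply (ex_derive_continuous G). unfold G, exp_ratio. auto_derive. lra.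
Qed.
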